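(* Let $\mathbb K$ be a commutative semiring with $0\ne1$ and let $S:\mathrm{NW}(\Delta)\to K$ be a regular nested word series. Then $\pi(S):\Delta^*\to K$ is an algebraic formal power series.
   Context: Nested words: $\Delta$ finite alphabet. A nesting relation of width $n$ is a relation $\nu$ on $[n]$ with: $\nu(i,j)\Rightarrow i<j$; $\nu(i,j),\nu(i,j')\Rightarrow j=j'$ and $\nu(i,j),\nu(i',j)\Rightarrow i=i'$; $\nu(i,j),\nu(i',j'),i<i'\Rightarrow j<i'$ or $j'<j$. A nested word is $(w,\nu)$, $w=a_1\cdots a_n\in\Delta^+$, $\nu$ of width $n$; $\mathrm{NW}(\Delta)$ is their set. If $\nu(i,j)$, $i$ is a call and $j$ a return position; others are internal. WNWA over $\mathbb K$: $\mathcal A=(Q,\iota,\delta_{call},\delta_{int},\delta_{ret},\kappa)$, $Q$ finite, $\delta_{call},\delta_{int}:Q\times\Delta\times Q\to K$, $\delta_{ret}:Q\times Q\times\Delta\times Q\to K$, $\iota,\kappa:Q\to K$. A run on $(a_1\cdots a_n,\nu)$ is $(q_0,\dots,q_n)$; weight at $j$: $\delta_{call}(q_{j-1},a_j,q_j)$ for a call $j$, $\delta_{int}(q_{j-1},a_j,q_j)$ for internal $j$, $\delta_{ret}(q_{j-1},q_{i-1},a_j,q_j)$ if $\nu(i,j)$; run weight is the product. $\|\mathcal A\|(nw)=\sum_{(q_0..q_n)}\iota(q_0)\mathrm{wt}\,\kappa(q_n)$. A series is regular if it equals some $\|\mathcal A\|$. Projection: $\pi(w,\nu)=w$ and $\pi(S)(w)=\sum_{nw\in\mathrm{NW}(\Delta),\,\pi(nw)=w}S(nw)$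 for $w\in\Delta^*$ (so $\pi(S)(\varepsilon)=0$). Algebraic series: a formal power series is a map $\Delta^*\to K$; $\varepsilon$ is the empty word; sums and scalar multiples are pointwise and the Cauchy product is $(S_1S_2)(w)=\sum_{w=w_1w_2}S_1(w_1)S_2(w_2)$; a word $u$ is identified with its characteristic series. Let $\mathcal X$ be a finite set of variables disjoint from $\Delta$. A polynomial is a map $P:(\Delta\cup\mathcal X)^*\to K$ with finite support. An algebraic system is a family $(P_X)_{X\in\mathcal X}$ of polynomials; a solution is a family $(S_X)_{X\in\mathcal X}$ of series $\Delta^*\to K$ with $S_X=\sum (P_X,u_1X_1\cdots u_kX_ku_{k+1})\,u_1S_{X_1}\cdots u_kS_{X_k}u_{k+1}$, summing over all $u_1X_1\cdots u_kX_ku_{k+1}$ in the support of $P_X$ ($u_j\in\Delta^*$, $X_j\in\mathcal X$). The system is proper if $P_X(Y)=P_X(\varepsilon)=0$ for all $X,Y\in\mathcal X$; a series $S$ is quasiregular if $S(\varepsilon)=0$. A proper system has exactly one quasiregular solution. A series is algebraic if it is a component $S_X$ of the quasiregular solution of a proper algebraic system. *)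

From HB Require Import structures.
From mathcomp Require Import all_boot all_order all_algebra.
Set Implicit Arguments. Unset Strict Implicit. Unset Printing Implicit Defensive.
Import GRing.Theory.
Local Open Scope ring_scope.

(* Positions are 0-indexed: position k : 'I_n corresponds to position k+1 of the paper. *)

Definition nesting (n : nat) (nu : {set 'I_n * 'I_n}) : bool :=
  [&& [forall i : 'I_n, forall j : 'I_n, ((i, j) \in nu) ==> (i < j)%N],
      [forall i : 'I_n, forall j : 'I_n, forall j' : 'I_n,
          ((i, j) \in nu) && ((i, j') \in nu) ==> (j == j')],
      [forall i : 'I_n, forall i' : 'I_n, forall j : 'I_n,
          ((i, j) \in nu) && ((i', j) \in nu) ==> (i == i')] &
      [forall i : 'I_n, forall j : 'I_n, forall i' : 'I_n, forall j' : 'I_n,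
          [&& (i, j) \in nu, (i', j') \in nu & (i < i')%N] ==>
          ((j < i')%N || (j' < j)%N)]].

Record nword (D : Type) := NWord {
  nw_w : seq D;
  nw_nu : {set 'I_(size nw_w) * 'I_(size nw_w)} }.

Definition is_nw (D : Type) (x : nword D) : bool :=
  (0 < size (nw_w x))%N && nesting (nw_nu x).

Record wnwa (D : finType) (K : comNzSemiRingType) := WNWA {
  wQ : finType;
  w_iota : wQ -> K;
  w_call : wQ -> D -> wQ -> K;
  w_int : wQ -> D -> wQ -> K;
  w_ret : wQ -> wQ -> D -> wQ -> K;
  w_kappa : wQ -> K }.

(* weight of the transition at position k of run r (r has |w|+1 states q_0..q_n) *)
Definition pos_weight (D : finType) (K : comNzSemiRingType) (A : wnwa D K)
    (x : nword D) (r : {ffun 'I_(size (nw_w x)).+1 -> wQ A})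
    (k : 'I_(size (nw_w x))) : K :=
  let a := tnth (in_tuple (nw_w x)) k in
  let qprev := r (inord k) in
  let qnext := r (inord k.+1) in
  match [pick i : 'I_(size (nw_w x)) | (i, k) \in nw_nu x] with
  | Some i => w_ret qprev (r (inord i)) a qnext
  | None =>
      if [exists j : 'I_(size (nw_w x)), (k, j) \in nw_nu x]
      then w_call qprev a qnext
      else w_int qprev a qnext
  end.

Definition behavior (D : finType) (K : comNzSemiRingType) (A : wnwa D K)
    (x : nword D) : K :=
  \sum_(r : {ffun 'I_(size (nw_w x)).+1 -> wQ A})
     (w_iota (r ord0) * (\prod_(k < size (nw_w x)) pos_weight r k)
      * w_kappa (r ord_max)).

Definition regular_nw (D : finType) (K : comNzSemiRingType) (S : nword D -> K) : Prop :=
  exists A : wnwa D K, forall x : nword D, is_nw x -> S x = behavior A x.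

Definition proj_nw (D : finType) (K : comNzSemiRingType) (S : nword D -> K)
    (w : seq D) : K :=
  if (0 < size w)%N then
    \sum_(nu : {set 'I_(size w) * 'I_(size w)} | nesting nu) S (NWord nu)
  else 0.

Definition series (D : Type) (K : Type) := seq D -> K.

Definition cauchy (D : Type) (K : comNzSemiRingType) (S1 S2 : series D K) : series D K :=
  fun w => \sum_(i < (size w).+1) S1 (take i w) * S2 (drop i w).

Definition char_word (D : eqType) (K : comNzSemiRingType) (u : seq D) : series D K :=
  fun w => (w == u)%:R.

Fixpoint mon_eval (D : eqType) (X : Type) (K : comNzSemiRingType)
    (SX : X -> series D K) (m : seq (D + X)) : series D K :=
  match m with
  | [::] => char_word K [::]
  | inl a :: m' => cauchy (char_word K [:: a]) (mon_eval SX m')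
  | inr x :: m' => cauchy (SX x) (mon_eval SX m')
  end.

(* S is algebraic: it is a component of the quasiregular solution of a proper
   algebraic system (P_x)_{x in X}; polynomials are maps (D+X)^* -> K whose
   supports are contained in the finite duplicate-free list supp. *)
Definition algebraic (D : finType) (K : comNzSemiRingType) (S : series D K) : Prop :=
  exists (X : finType) (P : X -> seq (D + X) -> K) (supp : seq (seq (D + X)))
         (SX : X -> series D K) (x0 : X),
    [/\ uniq supp,
        (forall x u, P x u != 0 -> u \in supp),
        (forall x y, P x [::] = 0 /\ P x [:: inr y] = 0),
        (forall x, SX x [::] = 0) &
        ((forall x w, SX x w = \sum_(u <- supp) P x u * mon_eval SX u w) /\
         (forall w, S w = SX x0 w))].

(* Position 0 of a nonempty nested word [a w] is either internal, or a call matched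
   with some position [i + 1], which splits [w] into a nested word [u] inside the pair
   and a nested word [v] after it.  Summing the run weights of a WNWA over all nesting
   relations accordingly, the series [T p q] of the weights of the runs from [p] to [q]
   (without initial and final weights) satisfies the proper algebraic system
     T p q = sum_(a, q1) int(p, a, q1) a (delta q1 q + T q1 q)
           + sum_(a, b, q1, q2, q3) call(p, a, q1) ret(q2, p, b, q3)
                 a (delta q1 q2 + T q1 q2) b (delta q3 q + T q3 q),
   where [delta x y] is the empty word if [x = y] and 0 otherwise; the projection of
   the behavior is sum_(p, q) iota(p) kappa(q) T p q. *)

From mathcomp Require Import all_boot all_order all_algebra.
From mathcomp Require Import zify ring.
From Stdlib Require Import FunctionalExtensionality.
Set Implicit Arguments. Unset Strict Implicit. Unset Printing Implicit Defensive.
Import GRing.Theory.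

Lemma iota0S n : iota 0 n.+1 = 0 :: map succn (iota 0 n).
Proof. by rewrite /= (iotaDl 1 0). Qed.

Lemma iota0D m n : iota 0 (m + n) = iota 0 m ++ map (addn m) (iota 0 n).
Proof. by rewrite iotaD add0n -iotaDl addn0. Qed.

Lemma eq_big_seq_cond (K : nmodType) (T : eqType) (r : seq T) (P1 P2 : pred T) (F1 F2 : T -> K) :
  {in r, P1 =1 P2} -> {in r, F1 =1 F2} ->
  (\sum_(x <- r | P1 x) F1 x = \sum_(x <- r | P2 x) F2 x)%R.
Proof.
move=> eqP12 eqF12; rewrite [LHS]big_mkcond [RHS]big_mkcond.
by apply: eq_big_seq => x xr; rewrite eqP12 ?eqF12.
Qed.

Section BigSums.
Variables (V : nmodType) (T : finType).
Local Open Scope ring_scope.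

Lemma big_tuple_cons n (F : n.+1.-tuple T -> V) :
  \sum_(t : n.+1.-tuple T) F t = \sum_(x : T) \sum_(t : n.-tuple T) F [tuple of x :: t].
Proof.
rewrite pair_bigA (reindex (fun p : T * n.-tuple T => [tuple of p.1 :: p.2])) //.
apply: onW_bij; exists (fun t => (thead t, [tuple of behead t])).
  by move=> [x t] /=; congr pair; apply: val_inj.
by move=> t /=; rewrite [RHS]tuple_eta.
Qed.

Lemma big_tuple_cat m n (F : (m + n).-tuple T -> V) :
  \sum_(t : (m + n).-tuple T) F t =
  \sum_(t1 : m.-tuple T) \sum_(t2 : n.-tuple T) F [tuple of t1 ++ t2].
Proof.
elim: m F => [|m IH] F.
  rewrite (big_pred1 [tuple]) => [|t]; last by apply/esym/eqP; apply: tuple0.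
  by apply: eq_bigr => t _; congr F; apply: val_inj.
rewrite (big_tuple_cons F) big_tuple_cons; apply: eq_bigr => x _.
rewrite IH; apply: eq_bigr => t1 _; apply: eq_bigr => t2 _.
by congr F; apply: val_inj.
Qed.

Lemma big_ffun_tuple m (F : {ffun 'I_m -> T} -> V) :
  \sum_(r : {ffun 'I_m -> T}) F r = \sum_(t : m.-tuple T) F [ffun i => tnth t i].
Proof.
rewrite (reindex (fun t : m.-tuple T => [ffun i => tnth t i])) //.
apply: onW_bij; exists (fun r : {ffun 'I_m -> T} => [tuple r i | i < m]).
  by move=> t; apply: eq_from_tnth => i; rewrite tnth_mktuple ffunE.
by move=> r; apply/ffunP => i; rewrite !ffunE tnth_mktuple.
Qed.

Lemma big_option (F : option T -> V) :
  \sum_(o : option T) F o = F None + \sum_(x : T) F (Some x).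
Proof.
rewrite (bigD1 None) //=; congr (_ + _).
by rewrite (reindex_omap Some id) //=; [apply: eq_bigl => x; rewrite eqxx | case].
Qed.

Lemma big_pair (T' : finType) (F : T * T' -> V) :
  \sum_(p : T * T') F p = \sum_(a : T) \sum_(b : T') F (a, b).
Proof. by rewrite pair_bigA; apply: eq_bigr => -[]. Qed.

End BigSums.

Lemma mulr_sum2 (R : comPzSemiRingType) (I J : finType) (PI : pred I) (PJ : pred J)
    (a b : R) (F : I -> R) (G : J -> R) :
  (a * (\sum_(x | PI x) F x) * b * (\sum_(y | PJ y) G y) =
   \sum_(x | PI x) \sum_(y | PJ y) a * F x * b * G y)%R.
Proof.
rewrite [(a * _)%R]mulr_sumr !mulr_suml; apply: eq_bigr => x _.
by rewrite mulr_sumr; apply: eq_bigr => y _; ring.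
Qed.

Lemma sum_delta (R : pzSemiRingType) (T : finType) (x : T) (F : T -> R) :
  (\sum_(y : T) (y == x)%:R * F y = F x)%R.
Proof.
under eq_bigr do rewrite mulr_natl mulrb.
by rewrite -big_mkcond big_pred1_eq.
Qed.

Section Cauchy.
Variables (K : comNzSemiRingType) (D : eqType).
Local Open Scope ring_scope.

Lemma cauchy1s (G : series D K) w : cauchy (char_word K [::]) G w = G w.
Proof.
rewrite /cauchy big_ord_recl /= /char_word take0 drop0 eqxx mul1r big1 ?addr0 // => i _.
have : size (take (lift ord0 i) w) != 0%N.
  by rewrite size_take /= /bump leq0n add1n; have := ltn_ord i; case: ifP => _; lia.
by case: (take _ w) => [|? ?] //= _; rewrite mul0r.
Qed.

Lemma cauchys1 (F : series D K) w : cauchy F (char_word K [::]) w = F w.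
Proof.
rewrite /cauchy big_ord_recr /= /char_word take_size drop_size eqxx mulr1 big1 ?add0r // => i _.
have : size (drop (widen_ord (leqnSn _) i) w) != 0%N.
  by rewrite size_drop /=; have := ltn_ord i; lia.
by case: (drop _ w) => [|? ?] //= _; rewrite mulr0.
Qed.

Lemma cauchy_letter b (G : series D K) w :
  cauchy (char_word K [:: b]) G w = if w is c :: w' then (c == b)%:R * G w' else 0.
Proof.
rewrite /cauchy /char_word; case: w => [|c w'] /=.
  by rewrite big_ord_recl big_ord0 /= mul0r addr0.
rewrite big_ord_recl /= mul0r add0r big_ord_recl /= take0 drop0 eqseq_cons andbT.
rewrite big1 ?addr0 // => i _; rewrite /= eqseq_cons.
have : size (take (lift ord0 i) w') != 0%N.
  by rewrite size_take /= /bump leq0n add1n; have := ltn_ord i; case: ifP => _; lia.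
by case: (take _ w') => [|? ?] //= _; rewrite andbF mul0r.
Qed.

Lemma cauchy_letter_r c (F G : series D K) b w :
  cauchy F (cauchy (char_word K [:: b]) G) w =
  \sum_(i < size w) F (take i w) * ((nth c w i == b)%:R * G (drop i.+1 w)).
Proof.
rewrite /cauchy big_ord_recr /= drop_size /= big_ord_recl big_ord0 /= /char_word mul0r addr0.
rewrite mulr0 addr0; apply: eq_bigr => i _.
rewrite (drop_nth c) //; congr (_ * _).
exact: (cauchy_letter b G (nth c w i :: drop i.+1 w)).
Qed.

End Cauchy.

Lemma eq_proj_nw (D : finType) (K : comNzSemiRingType) (S S' : nword D -> K) :
  (forall x, is_nw x -> S x = S' x) -> proj_nw S =1 proj_nw S'.
Proof.
move=> SS' w; rewrite /proj_nw; case: ifP => // w_gt0.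
by apply: eq_bigr => nu nu_nest; apply: SS'; rewrite /is_nw w_gt0.
Qed.

(* Nesting relations as relations on [nat], so that the width can change freely. *)
Definition nesting_rel (n : nat) (P : rel nat) : Prop :=
  [/\ forall i j, P i j -> i < j < n,
      forall i j j', P i j -> P i j' -> j = j',
      forall i i' j, P i j -> P i' j -> i = i' &
      forall i j i' j', P i j -> P i' j' -> i < i' -> j < i' \/ j' < j].

Definition rel_of_set n (nu : {set 'I_n * 'I_n}) : rel nat :=
  fun i j => [exists x in nu, (x.1 == i :> nat) && (x.2 == j :> nat)].

Definition set_of_rel n (P : rel nat) : {set 'I_n * 'I_n} := [set x : 'I_n * 'I_n | P x.1 x.2].

Lemma rel_of_setE n (nu : {set 'I_n * 'I_n}) (i j : 'I_n) : rel_of_set nu i j = ((i, j) \in nu).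
Proof.
apply/existsP/idP => [[[a b] /andP[ab /andP[/= /eqP ea /eqP eb]]]|ij].
  by rewrite -(val_inj ea) -(val_inj eb).
by exists (i, j); rewrite ij !eqxx.
Qed.

Lemma rel_of_setP n (nu : {set 'I_n * 'I_n}) i j :
  rel_of_set nu i j -> exists a b : 'I_n, [/\ i = a, j = b & (a, b) \in nu].
Proof. by move/existsP=> [[a b] /andP[ab /andP[/eqP <- /eqP <-]]]; exists a, b. Qed.

Lemma rel_of_setK n : cancel (@rel_of_set n) (set_of_rel n).
Proof. by move=> nu; apply/setP => -[a b]; rewrite inE rel_of_setE. Qed.

Lemma set_of_relK n P : nesting_rel n P -> rel_of_set (set_of_rel n P) = P.
Proof.
case=> bound _ _ _; apply: functional_extensionality => i.
apply: functional_extensionality => j; apply/idP/idP.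
  by case/rel_of_setP=> a [b [-> -> ab]]; rewrite inE in ab.
move=> Pij; have /andP[ij jn] := bound _ _ Pij; have i_n : i < n by lia.
by rewrite (rel_of_setE _ (Ordinal i_n) (Ordinal jn)) inE.
Qed.

Lemma nestingP n (nu : {set 'I_n * 'I_n}) : nesting nu <-> nesting_rel n (rel_of_set nu).
Proof.
split.
  case/and4P=> H1 H2 H3 H4; split.
  - move=> i j /rel_of_setP [a [b [-> -> ab]]].
    by rewrite ltn_ord andbT; exact: implyP (forallP (forallP H1 a) b) ab.
  - move=> i j j' /rel_of_setP [a [b [-> -> ab]]] /rel_of_setP [a' [b' [/val_inj ea -> ab']]].
    subst a'; suff /eqP -> : b == b' by [].
    by apply: implyP (forallP (forallP (forallP H2 a) b) b') _; rewrite ab ab'.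
  - move=> i i' j /rel_of_setP [a [b [-> -> ab]]] /rel_of_setP [a' [b' [-> /val_inj eb ab']]].
    subst b'; suff /eqP -> : a == a' by [].
    by apply: implyP (forallP (forallP (forallP H3 a) a') b) _; rewrite ab ab'.
  - move=> i j i' j' /rel_of_setP [a [b [-> -> ab]]] /rel_of_setP [a' [b' [-> -> ab']]] lt.
    apply/orP; apply: implyP (forallP (forallP (forallP (forallP H4 a) b) a') b') _.
    by rewrite ab ab' lt.
case=> H1 H2 H3 H4; apply/and4P; split.
- apply/forallP=> a; apply/forallP=> b; apply/implyP=> ab.
  by have := H1 a b; rewrite rel_of_setE => /(_ ab) /andP[].
- apply/forallP=> a; apply/forallP=> b; apply/forallP=> b'; apply/implyP=> /andP[ab ab'].
  by apply/eqP/val_inj; apply: (H2 a); rewrite rel_of_setE.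
- apply/forallP=> a; apply/forallP=> a'; apply/forallP=> b; apply/implyP=> /andP[ab ab'].
  by apply/eqP/val_inj; apply: (H3 _ _ b); rewrite rel_of_setE.
- apply/forallP=> a; apply/forallP=> b; apply/forallP=> a'; apply/forallP=> b'.
  apply/implyP=> /and3P[ab ab' lt]; apply/orP.
  by apply: (H4 a b a' b') => //; rewrite rel_of_setE.
Qed.

Lemma reindex_nesting (V : nmodType) n (J : finType) (PJ : pred J) (g : J -> rel nat)
    (C : pred (rel nat)) (F : rel nat -> V) :
  (forall y, PJ y -> nesting_rel n (g y) /\ C (g y)) ->
  (forall y y', PJ y -> PJ y' -> g y = g y' -> y = y') ->
  (forall P, nesting_rel n P -> C P -> exists2 y, PJ y & g y = P) ->
  (\sum_(nu : {set 'I_n * 'I_n} | nesting nu && C (rel_of_set nu)) F (rel_of_set nu) =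
   \sum_(y | PJ y) F (g y))%R.
Proof.
move=> gP g_inj g_onto.
rewrite (reindex_omap (fun y => set_of_rel n (g y))
          (fun nu => [pick y | PJ y && (set_of_rel n (g y) == nu)])); last first.
  move=> nu /andP[/nestingP nu_nest Cnu]; have [y Py gy] := g_onto _ nu_nest Cnu.
  case: pickP => [y' /andP[_ /eqP <-] //|/(_ y)].
  by rewrite Py gy rel_of_setK eqxx.
apply: eq_big => y; last first.
  move=> /andP[_]; case: pickP => [y' /andP[Py' _] /eqP [<-]|//].
  by rewrite set_of_relK //; case: (gP y' Py').
case Py: (PJ y); last first.
  case: pickP => [y' /andP[Py' _]|_]; last by rewrite andbF.
  by case: eqP => [[ey]|]; [rewrite ey Py in Py' | rewrite andbF].
have [gy_nest Cgy] := gP y Py.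
rewrite set_of_relK // Cgy andbT.
have /nestingP -> : nesting_rel n (rel_of_set (set_of_rel n (g y))) by rewrite set_of_relK.
case: pickP => [y' /andP[Py' /eqP e]|/(_ y)]; last by rewrite Py eqxx.
have := congr1 (@rel_of_set n) e; rewrite !set_of_relK //; last by case: (gP y' Py').
by move/(g_inj _ _ Py' Py) ->; rewrite eqxx.
Qed.

Definition shift_rel (P : rel nat) : rel nat := fun i j =>
  if (i, j) is (i'.+1, j'.+1) then P i' j' else false.

Definition unshift_rel (P : rel nat) : rel nat := fun i j => P i.+1 j.+1.

Lemma nesting_shift_rel n P : nesting_rel n P -> nesting_rel n.+1 (shift_rel P).
Proof.
case=> s f g c; split.
- by move=> [|i] [|j] //= h; have := s _ _ h; lia.
- by move=> [|i] [|j] [|j'] //= h h'; rewrite (f _ _ _ h h').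
- by move=> [|i] [|i'] [|j] //= h h'; rewrite (g _ _ _ h h').
- move=> [|i] [|j] [|i'] [|j'] //= h h' lt.
  by have := c _ _ _ _ h h'; lia.
Qed.

Lemma nesting_unshift_rel n P : nesting_rel n.+1 P -> nesting_rel n (unshift_rel P).
Proof.
case=> s f g c; split; rewrite /unshift_rel.
- by move=> i j h; have := s _ _ h; lia.
- by move=> i j j' h h'; have := f _ _ _ h h'; lia.
- by move=> i i' j h h'; have := g _ _ _ h h'; lia.
- by move=> i j i' j' h h' lt; have := c _ _ _ _ h h'; lia.
Qed.

Lemma shift_unshift_rel n P :
  nesting_rel n.+1 P -> ~~ has (P 0) (iota 0 n.+1) -> shift_rel (unshift_rel P) = P.
Proof.
case=> s _ _ _ P0; apply: functional_extensionality => i.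
apply: functional_extensionality => j.
case: i => [|i]; case: j => [|j] //=.
- by case h: (P 0 0) => //; have := s _ _ h.
- case h: (P 0 j.+1) => //; case/hasP: P0; exists j.+1 => //.
  by rewrite mem_iota; have := s _ _ h; lia.
- by case h: (P i.+1 0) => //; have := s _ _ h.
Qed.

(* Position 0 is a call matched with [j + 1]; [P1] nests the positions [1 .. j]
   and [P2], shifted by [j + 2], the positions after [j + 1]. *)
Definition join_rel (j : nat) (P1 P2 : rel nat) : rel nat := fun i k =>
  match i, k with
  | 0, _ => k == j.+1
  | i'.+1, 0 => false
  | i'.+1, k'.+1 => if (i' < j) && (k' < j) then P1 i' k'
                   else if (j < i') && (j < k') then P2 (i' - j.+1) (k' - j.+1) else false
  end.

Definition inner_rel (j : nat) (P : rel nat) : rel nat :=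
  fun x y => [&& x < j, y < j & P x.+1 y.+1].

Definition outer_rel (j : nat) (P : rel nat) : rel nat := fun x y => P (x + j.+2) (y + j.+2).

Lemma join_rel_inner j P1 P2 x y : x < j -> y < j -> join_rel j P1 P2 x.+1 y.+1 = P1 x y.
Proof. by move=> hx hy /=; rewrite hx hy. Qed.

Lemma outer_join_rel j P1 P2 : outer_rel j (join_rel j P1 P2) = P2.
Proof.
apply: functional_extensionality => x; apply: functional_extensionality => y.
rewrite /outer_rel !addnS /=.
have -> : ((x + j).+1 < j) = false by lia.
have -> : (j < (x + j).+1) by lia.
have -> : (j < (y + j).+1) by lia.
by rewrite !subSS !addnK.
Qed.

Lemma inner_join_rel j P1 P2 : nesting_rel j P1 -> inner_rel j (join_rel j P1 P2) = P1.
Proof.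
case=> s _ _ _; apply: functional_extensionality => x; apply: functional_extensionality => y.
rewrite /inner_rel; case: (boolP (x < j)) => hx; case: (boolP (y < j)) => hy /=.
  exact: join_rel_inner.
all: by case h: (P1 x y) => //; have := s _ _ h; lia.
Qed.

Lemma join_relP j n2 P1 P2 x y : nesting_rel j P1 -> nesting_rel n2 P2 -> join_rel j P1 P2 x y ->
  [\/ x = 0 /\ y = j.+1,
      exists x' y', [/\ x = x'.+1, y = y'.+1, x' < y' < j & P1 x' y'] |
      exists x' y', [/\ x = x' + j.+2, y = y' + j.+2, x' < y' < n2 & P2 x' y']].
Proof.
case=> s1 _ _ _ [s2 _ _ _].
case: x => [|x] /=; first by move/eqP ->; apply: Or31.
case: y => [|y] //=.
case: ifP => [_ h|_]; first by apply: Or32; exists x, y; split => //; exact: s1.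
case: ifP => // /andP[hx hy] h; apply: Or33.
exists (x - j.+1), (y - j.+1); split; [lia|lia|exact: s2|done].
Qed.

Lemma nesting_join_rel j n P1 P2 :
  j < n -> nesting_rel j P1 -> nesting_rel (n - j.+1) P2 -> nesting_rel n.+1 (join_rel j P1 P2).
Proof.
move=> hj N1 N2; have [s1 f1 g1 c1] := N1; have [s2 f2 g2 c2] := N2; split.
- by move=> x y /(join_relP N1 N2) [[-> ->]|[x' [y' [-> -> h _]]]|[x' [y' [-> -> h _]]]]; lia.
- move=> x y y' /(join_relP N1 N2) C1 /(join_relP N1 N2) C2.
  case: C1 => [[e1 e2]|[a [b [e1 e2 h1 p1]]]|[a [b [e1 e2 h1 p1]]]];
  case: C2 => [[e3 e4]|[a' [b' [e3 e4 h2 p2]]]|[a' [b' [e3 e4 h2 p2]]]]; try lia.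
  + have ea : a = a' by lia.
    by subst; rewrite (f1 _ _ _ p1 p2).
  + have ea : a = a' by lia.
    by subst; rewrite (f2 _ _ _ p1 p2).
- move=> x x' y /(join_relP N1 N2) C1 /(join_relP N1 N2) C2.
  case: C1 => [[e1 e2]|[a [b [e1 e2 h1 p1]]]|[a [b [e1 e2 h1 p1]]]];
  case: C2 => [[e3 e4]|[a' [b' [e3 e4 h2 p2]]]|[a' [b' [e3 e4 h2 p2]]]]; try lia.
  + have eb : b = b' by lia.
    by subst; rewrite (g1 _ _ _ p1 p2).
  + have eb : b = b' by lia.
    by subst; rewrite (g2 _ _ _ p1 p2).
- move=> x y x' y' /(join_relP N1 N2) C1 /(join_relP N1 N2) C2 lt.
  case: C1 => [[e1 e2]|[a [b [e1 e2 h1 p1]]]|[a [b [e1 e2 h1 p1]]]];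
  case: C2 => [[e3 e4]|[a' [b' [e3 e4 h2 p2]]]|[a' [b' [e3 e4 h2 p2]]]]; try lia.
  + by have := c1 _ _ _ _ p1 p2; lia.
  + by have := c2 _ _ _ _ p1 p2; lia.
Qed.

Lemma nesting_inner_rel n j P : nesting_rel n.+1 P -> nesting_rel j (inner_rel j P).
Proof.
case=> s f g c; split; rewrite /inner_rel.
- by move=> i k /and3P[a b h]; have := s _ _ h; lia.
- by move=> i k k' /and3P[_ _ h] /and3P[_ _ h']; have := f _ _ _ h h'; lia.
- by move=> i i' k /and3P[_ _ h] /and3P[_ _ h']; have := g _ _ _ h h'; lia.
- by move=> i k i' k' /and3P[_ _ h] /and3P[_ _ h'] lt; have := c _ _ _ _ h h'; lia.
Qed.

Lemma nesting_outer_rel n j P : nesting_rel n.+1 P -> nesting_rel (n - j.+1) (outer_rel j P).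
Proof.
case=> s f g c; split; rewrite /outer_rel.
- by move=> i k h; have := s _ _ h; lia.
- by move=> i k k' h h'; have := f _ _ _ h h'; lia.
- by move=> i i' k h h'; have := g _ _ _ h h'; lia.
- by move=> i k i' k' h h' lt; have := c _ _ _ _ h h'; lia.
Qed.

(* The nesting condition forbids a pair [(i, k)] straddling the pair [(0, j + 1)]. *)
Lemma join_inner_outer_rel n j P :
  nesting_rel n.+1 P -> P 0 j.+1 -> join_rel j (inner_rel j P) (outer_rel j P) = P.
Proof.
move=> [s f g c] P0j; apply: functional_extensionality => x.
apply: functional_extensionality => y.
case: x => [|x] /=.
  by apply/eqP/idP => [->//|h]; exact: (f _ _ _ h P0j).
case: y => [|y]; first by case h: (P x.+1 0) => //; have := s _ _ h.
case: ifP => [/andP[a b]|nab]; first by rewrite /inner_rel a b.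
case: ifP => [/andP[a b]|nab2]; first by rewrite /outer_rel; congr P; lia.
case h: (P x.+1 y.+1) => //.
have := s _ _ h; have := c _ _ _ _ P0j h; move/(_ isT).
by move: nab nab2; case: (ltnP x j); case: (ltnP y j); case: (ltnP j x); case: (ltnP j y) => //=; lia.
Qed.

Section NestingSums.
Variable V : nmodType.
Local Open Scope ring_scope.

Lemma big_nesting_first_internal n (F : rel nat -> V) :
  \sum_(nu : {set 'I_n.+1 * 'I_n.+1} | nesting nu && ~~ has (rel_of_set nu 0) (iota 0 n.+1))
     F (rel_of_set nu) =
  \sum_(nu : {set 'I_n * 'I_n} | nesting nu) F (shift_rel (rel_of_set nu)).
Proof.
apply: (reindex_nesting (C := fun P => ~~ has (P 0) (iota 0 n.+1))).
- move=> y /nestingP y_nest; split; first exact: nesting_shift_rel.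
  by apply/hasP => -[].
- by move=> y y' _ _ /(congr1 unshift_rel); apply: (can_inj (@rel_of_setK n)).
- move=> P P_nest P0; have uP_nest := nesting_unshift_rel P_nest.
  exists (set_of_rel n (unshift_rel P)); first by apply/nestingP; rewrite set_of_relK.
  by rewrite set_of_relK // (shift_unshift_rel P_nest).
Qed.

Lemma big_nesting_first_call n (i : 'I_n) (F : rel nat -> V) :
  \sum_(nu : {set 'I_n.+1 * 'I_n.+1} | nesting nu && rel_of_set nu 0 i.+1) F (rel_of_set nu) =
  \sum_(x : {set 'I_i * 'I_i} * {set 'I_(n - i.+1) * 'I_(n - i.+1)} | nesting x.1 && nesting x.2)
     F (join_rel i (rel_of_set x.1) (rel_of_set x.2)).
Proof.
apply: (reindex_nesting (C := fun P => P 0 i.+1)).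
- move=> [y1 y2] /andP[/nestingP y1_nest /nestingP y2_nest]; split; last by rewrite /= eqxx.
  exact: nesting_join_rel.
- move=> [y1 y2] [y1' y2'] /andP[/nestingP y1_nest _] /andP[/nestingP y1'_nest _] /= e.
  have e1 := congr1 (inner_rel i) e; have e2 := congr1 (outer_rel i) e.
  rewrite !inner_join_rel // in e1; rewrite !outer_join_rel in e2.
  by rewrite (can_inj (@rel_of_setK _) e1) (can_inj (@rel_of_setK _) e2).
- move=> P P_nest P0; have in_nest := nesting_inner_rel i P_nest.
  have out_nest := nesting_outer_rel i P_nest.
  exists (set_of_rel i (inner_rel i P), set_of_rel (n - i.+1) (outer_rel i P)).
    by apply/andP; split; apply/nestingP; rewrite set_of_relK.
  by rewrite /= !set_of_relK // (join_inner_outer_rel P_nest).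
Qed.

Lemma big_nesting_first_matched n (F : rel nat -> V) :
  \sum_(nu : {set 'I_n.+1 * 'I_n.+1} | nesting nu && has (rel_of_set nu 0) (iota 0 n.+1))
     F (rel_of_set nu) =
  \sum_(i < n) \sum_(nu : {set 'I_n.+1 * 'I_n.+1} | nesting nu && rel_of_set nu 0 i.+1)
     F (rel_of_set nu).
Proof.
rewrite (exchange_big_dep predT) // big_mkcondr [LHS]big_mkcond.
apply: eq_bigr => nu _.
case: (boolP (nesting nu)) => [/nestingP [s f _ _]|nu_nest]; last first.
  by rewrite big_pred0 // => i; rewrite (negbTE nu_nest).
case: ifP => [/hasP [j _ P0j]|P0].
  have /andP[j_gt0 j_le] := s _ _ P0j; have j_lt : (j.-1 < n)%N by lia.
  rewrite (big_pred1 (Ordinal j_lt)) // => i /=.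
  apply/idP/eqP => [P0i|->]; last by rewrite prednK.
  by apply: val_inj => /=; have := f _ _ _ P0i P0j; lia.
rewrite big_pred0 // => i /=; apply/negbTE/negP => P0i; move/negP: P0; apply.
by apply/hasP; exists i.+1 => //; rewrite mem_iota; have := ltn_ord i; lia.
Qed.

Lemma big_nesting_recl n (F : rel nat -> V) :
  \sum_(nu : {set 'I_n.+1 * 'I_n.+1} | nesting nu) F (rel_of_set nu) =
  \sum_(nu : {set 'I_n * 'I_n} | nesting nu) F (shift_rel (rel_of_set nu)) +
  \sum_(i < n) \sum_(x : {set 'I_i * 'I_i} * {set 'I_(n - i.+1) * 'I_(n - i.+1)} |
        nesting x.1 && nesting x.2) F (join_rel i (rel_of_set x.1) (rel_of_set x.2)).
Proof.
rewrite (bigID (fun nu => has (rel_of_set nu 0) (iota 0 n.+1))) /= addrC.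
rewrite big_nesting_first_internal big_nesting_first_matched.
by congr (_ + _); apply: eq_bigr => i _; exact: big_nesting_first_call.
Qed.

End NestingSums.

Section RunWeights.
Variables (K : comNzSemiRingType) (D : finType) (A : wnwa D K).
Local Notation Q := (wQ A).

(* [s k] and [s k.+1] are the states before and after position [k]; a return
   position has a unique call partner, so the sum has at most one term. *)
Definition pos_wt n (P : rel nat) (s : nat -> Q) (a : D) (k : nat) : K :=
  if has (fun i => P i k) (iota 0 k)
  then (\sum_(i <- iota 0 k | P i k) w_ret (s k) (s i) a (s k.+1))%R
  else if has (P k) (iota 0 n) then w_call (s k) a (s k.+1) else w_int (s k) a (s k.+1).

Fixpoint word_wt (f : D -> nat -> K) (w : seq D) (k : nat) : K :=
  if w is a :: w' then (f a k * word_wt f w' k.+1)%R else 1%R.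

Lemma word_wt_cat f u v k : word_wt f (u ++ v) k = (word_wt f u k * word_wt f v (k + size u))%R.
Proof.
elim: u k => [|a u IH] k /=; first by rewrite mul1r addn0.
by rewrite IH mulrA addnS.
Qed.

Lemma eq_word_wt f g w k k' :
  (forall i a, (i < size w)%N -> f a (k + i)%N = g a (k' + i)%N) ->
  word_wt f w k = word_wt g w k'.
Proof.
elim: w k k' => [|a w IH] k k' //= fg.
have := fg 0 a isT; rewrite !addn0 => ->; congr (_ * _)%R.
by apply: IH => i b hi; rewrite !addSn -!addnS; exact: fg.
Qed.

Lemma word_wt_prod x0 f w k :
  word_wt f w k = (\prod_(i < size w) f (nth x0 w i) (k + i)%N)%R.
Proof.
elim: w k => [|a w IH] k /=; first by rewrite big_ord0.
rewrite big_ord_recl /= addn0 IH; congr (_ * _)%R.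
by apply: eq_bigr => i _; rewrite /= addSnnS.
Qed.

Lemma eq_pos_wt n P s s' a k : (forall i, (i <= k.+1)%N -> s i = s' i) ->
  pos_wt n P s a k = pos_wt n P s' a k.
Proof.
move=> ss'; rewrite /pos_wt !ss' //; congr (if _ then _ else _).
apply: eq_big_seq_cond => // i; rewrite mem_iota => /andP[_ ik].
by rewrite ss' // ltnW // ltnW.
Qed.

Lemma word_wt_eq_states n P s s' w : (forall i, (i <= size w)%N -> s i = s' i) ->
  word_wt (pos_wt n P s) w 0 = word_wt (pos_wt n P s') w 0.
Proof.
move=> ss'; apply: eq_word_wt => i a hi; rewrite !add0n; apply: eq_pos_wt => x hx.
apply: ss'; lia.
Qed.

Lemma pos_wt_shift_rel n P s a i :
  pos_wt n.+1 (shift_rel P) s a i.+1 = pos_wt n P (fun x => s x.+1) a i.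
Proof. by rewrite /pos_wt !iota0S /= !has_map !big_cons /= !big_map. Qed.

Lemma pos_wt_shift_rel0 n P s a :
  pos_wt n.+1 (shift_rel P) s a 0 = w_int (s 0%N) a (s 1%N).
Proof. by rewrite /pos_wt /=; case: hasP => // -[]. Qed.

Lemma pos_wt_join_rel_call j n2 P1 P2 s a :
  pos_wt (j + n2.+1).+1 (join_rel j P1 P2) s a 0 = w_call (s 0%N) a (s 1%N).
Proof.
rewrite /pos_wt; suff -> : has (join_rel j P1 P2 0) (iota 0 (j + n2.+1).+1) by [].
by apply/hasP; exists j.+1; [rewrite mem_iota; lia | rewrite /= eqxx].
Qed.

Lemma pos_wt_join_rel_in j n2 P1 P2 s b k : (k < j)%N ->
  pos_wt (j + n2.+1).+1 (join_rel j P1 P2) s b k.+1 = pos_wt j P1 (fun x => s x.+1) b k.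
Proof.
move=> hk; rewrite /pos_wt.
have e1 : has (fun i => join_rel j P1 P2 i k.+1) (iota 0 k.+1) = has (fun i => P1 i k) (iota 0 k).
  rewrite iota0S /= eqSS (ltn_eqF hk) /= has_map; apply: eq_in_has => x.
  rewrite mem_iota => /andP[_ hx] /=; have -> : (x < j)%N by lia.
  by rewrite hk.
have e2 : (\sum_(i <- iota 0 k.+1 | join_rel j P1 P2 i k.+1) w_ret (s k.+1) (s i) b (s k.+2) =
          \sum_(i <- iota 0 k | P1 i k) w_ret (s k.+1) (s i.+1) b (s k.+2))%R.
  rewrite iota0S big_cons /= eqSS (ltn_eqF hk) big_map; apply: eq_big_seq_cond => x //.
  rewrite mem_iota => /andP[_ hx] /=; have -> : (x < j)%N by lia.
  by rewrite hk.
have e3 : has (join_rel j P1 P2 k.+1) (iota 0 (j + n2.+1).+1) = has (P1 k) (iota 0 j).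
  rewrite iota0S /= has_map iota0D has_cat has_map.
  have -> : has (preim (addn j) (preim succn (join_rel j P1 P2 k.+1))) (iota 0 n2.+1) = false.
    apply/hasP => -[x _] /=; rewrite hk /=; have -> : (j + x < j)%N = false by lia.
    by have -> : (j < k)%N = false by lia.
  rewrite orbF; apply: eq_in_has => x; rewrite mem_iota => /andP[_ hx] /=.
  by rewrite hk hx.
by rewrite e1 e2 e3.
Qed.

Lemma pos_wt_join_rel_ret j n2 P1 P2 s b :
  pos_wt (j + n2.+1).+1 (join_rel j P1 P2) s b j.+1 = w_ret (s j.+1) (s 0%N) b (s j.+2).
Proof.
rewrite /pos_wt iota0S /= eqxx /= big_cons /= eqxx big_map big_pred0 ?addr0 // => x /=.
by rewrite ltnn !andbF.
Qed.

Lemma pos_wt_join_rel_out j n2 P1 P2 s b k : (k < n2)%N ->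
  pos_wt (j + n2.+1).+1 (join_rel j P1 P2) s b (j.+2 + k) =
  pos_wt n2 P2 (fun x => s (j.+2 + x)%N) b k.
Proof.
move=> hk.
have hl : forall x, (x < j.+2)%N -> join_rel j P1 P2 x (j.+2 + k) = false.
  move=> [|x] hx; first by rewrite /=; apply/eqP; lia.
  rewrite !addSn /=; have -> : ((j + k).+1 < j)%N = false by lia.
  by rewrite andbF; have -> : (j < x)%N = false by lia.
have hr : forall x, (x < j.+2)%N -> join_rel j P1 P2 (j.+2 + k) x = false.
  move=> [|x] hx; first by rewrite !addSn.
  rewrite !addSn /=; have -> : ((j + k).+1 < j)%N = false by lia.
  have -> : (j < x)%N = false by lia.
  by rewrite andbF.
have hm : forall x y, join_rel j P1 P2 (j.+2 + x) (j.+2 + y) = P2 x y.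
  by move=> x y; rewrite ![(j.+2 + _)%N]addnC -[RHS](congr1 (fun P => P x y) (outer_join_rel j P1 P2)).
rewrite /pos_wt (_ : (j + n2.+1).+1 = j.+2 + n2)%N; last by lia.
rewrite !iota0D !has_cat big_cat !has_map big_map.
have -> : has (fun i => join_rel j P1 P2 i (j.+2 + k)) (iota 0 j.+2) = false.
  by apply/hasP => -[x]; rewrite mem_iota => hx; rewrite hl //; lia.
have -> : has (join_rel j P1 P2 (j.+2 + k)) (iota 0 j.+2) = false.
  by apply/hasP => -[x]; rewrite mem_iota => hx; rewrite hr //; lia.
rewrite big1_seq ?add0r; last first.
  move=> x /andP[hc]; rewrite mem_iota => hx; have hx' : (x < j.+2)%N by lia.
  by rewrite hl in hc.
rewrite (eq_has (a2 := fun i => P2 i k)); last by move=> x; exact: hm.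
rewrite (eq_has (a1 := preim _ _) (a2 := P2 k)); last by move=> x; exact: hm.
rewrite addnS; congr (if _ then _ else _).
by rewrite Monoid.mul1m; apply: eq_bigl => x; exact: hm.
Qed.

End RunWeights.

Section Runs.
Variables (K : comNzSemiRingType) (D : finType) (A : wnwa D K).
Local Notation Q := (wQ A).

(* The tuple [t] lists the states after each position; initial and final weights
   are left out. *)
Definition runs_wt n (P : rel nat) (p q : Q) (w : seq D) : K :=
  (\sum_(t : n.-tuple Q) (last p t == q)%:R * word_wt (pos_wt n P (nth p (p :: t))) w 0)%R.

Lemma runs_wt_shift_rel n P p q a w : size w = n ->
  runs_wt n.+1 (shift_rel P) p q (a :: w) = (\sum_(q1 : Q) w_int p a q1 * runs_wt n P q1 q w)%R.
Proof.
move=> w_n; rewrite /runs_wt big_tuple_cons; apply: eq_bigr => q1 _.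
rewrite mulr_sumr; apply: eq_bigr => t _ /=.
rewrite pos_wt_shift_rel0 (@eq_word_wt _ _ _ (pos_wt n P (fun x => nth p [:: p, q1 & t] x.+1)) w 1 0);
  last by move=> i b _; rewrite add0n add1n pos_wt_shift_rel.
rewrite (@word_wt_eq_states _ _ A n P _ (nth q1 (q1 :: t))) 1?mulrCA // => i hi /=.
by apply: set_nth_default; rewrite /= size_tuple; lia.
Qed.

Lemma nth_states_cat (p q1 q3 : Q) (t1 t2 : seq Q) :
  let s := nth p (p :: (q1 :: t1) ++ (q3 :: t2)) in
  [/\ forall x, (x <= size t1)%N -> s x.+1 = nth q1 (q1 :: t1) x,
      s (size t1).+1 = last q1 t1,
      s (size t1).+2 = q3 &
      forall x, (x <= size t2)%N -> s ((size t1).+2 + x)%N = nth q3 (q3 :: t2) x].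
Proof.
move=> s; split.
- move=> x hx; rewrite /s /= -cat_cons nth_cat /=.
  have -> : (x < (size t1).+1)%N by lia.
  by apply: set_nth_default => /=; lia.
- by rewrite /s /= -cat_cons nth_cat /= ltnSn -[RHS](nth_last p (q1 :: t1)).
- by rewrite /s /= nth_cat ltnn subnn.
- move=> x hx; rewrite /s addSn /= nth_cat.
  have -> : (size t1 + x < size t1)%N = false by lia.
  rewrite (_ : (size t1 + x - size t1)%N = x); last by lia.
  by apply: set_nth_default => /=; lia.
Qed.

Lemma word_wt_join_rel j n2 P1 P2 p q1 q3 (t1 t2 : seq Q) a u b v :
  size t1 = j -> size t2 = n2 -> size u = j -> size v = n2 ->
  word_wt (pos_wt (j + n2.+1).+1 (join_rel j P1 P2) (nth p (p :: (q1 :: t1) ++ q3 :: t2)))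
    (a :: u ++ b :: v) 0 =
  (w_call p a q1 * word_wt (pos_wt j P1 (nth q1 (q1 :: t1))) u 0 * w_ret (last q1 t1) p b q3
   * word_wt (pos_wt n2 P2 (nth q3 (q3 :: t2))) v 0)%R.
Proof.
move=> t1_j t2_n2 u_j v_n2.
have [s_in s_ret s_out0 s_out] := nth_states_cat p q1 q3 t1 t2.
rewrite t1_j in s_in s_ret s_out0 s_out.
set s := nth p _ in s_in s_ret s_out0 s_out *.
rewrite /= pos_wt_join_rel_call word_wt_cat /= u_j add1n.
rewrite (@eq_word_wt _ _ _ (pos_wt j P1 (fun x => s x.+1)) u 1 0);
  last by move=> i c hi; rewrite add0n add1n pos_wt_join_rel_in // -u_j.
rewrite (@word_wt_eq_states _ _ A j P1 _ (nth q1 (q1 :: t1))); last first.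
  by move=> x hx; apply: s_in; rewrite -u_j.
rewrite pos_wt_join_rel_ret s_ret s_out0.
rewrite (@eq_word_wt _ _ _ (pos_wt n2 P2 (fun x => s (j.+2 + x)%N)) v j.+2 0);
  last by move=> i c hi; rewrite add0n pos_wt_join_rel_out // -v_n2.
rewrite (@word_wt_eq_states _ _ A n2 P2 _ (nth q3 (q3 :: t2))); last first.
  by move=> x hx; apply: s_out; rewrite t2_n2 -v_n2.
by rewrite /s /= !mulrA.
Qed.

Lemma runs_wt_join_rel N j n2 P1 P2 p q a w u b v :
  N = (j + n2.+1).+1 -> w = u ++ b :: v -> size u = j -> size v = n2 ->
  runs_wt N (join_rel j P1 P2) p q (a :: w) =
  (\sum_(q1 : Q) \sum_(q2 : Q) \sum_(q3 : Q)
     w_call p a q1 * runs_wt j P1 q1 q2 u * w_ret q2 p b q3 * runs_wt n2 P2 q3 q v)%R.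
Proof.
move=> -> -> u_j v_n2; rewrite /runs_wt big_tuple_cons; apply: eq_bigr => q1 _.
rewrite big_tuple_cat; under eq_bigr => t1 _ do rewrite big_tuple_cons.
under [RHS]eq_bigr => q2 _ do under eq_bigr => q3 _ do rewrite mulr_sum2.
under [RHS]eq_bigr => q2 _ do rewrite exchange_big.
rewrite [RHS]exchange_big; apply: eq_bigr => t1 _.
rewrite [RHS]exchange_big; apply: eq_bigr => q3 _.
rewrite [RHS]exchange_big; apply: eq_bigr => t2 _.
rewrite (word_wt_join_rel P1 P2 p q1 q3 a b (size_tuple t1) (size_tuple t2) u_j v_n2) /= last_cat /=.
rewrite -(sum_delta (last q1 t1) (fun q2 => (last q3 t2 == q)%:R *
  (w_call p a q1 * word_wt (pos_wt j P1 (nth q1 (q1 :: t1))) u 0 * w_ret q2 p b q3 *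
   word_wt (pos_wt n2 P2 (nth q3 (q3 :: t2))) v 0))%R).
by apply: eq_bigr => q2 _; rewrite eq_sym; ring.
Qed.

Definition trans_wtn n (p q : Q) (w : seq D) : K :=
  (\sum_(nu : {set 'I_n * 'I_n} | nesting nu) runs_wt n (rel_of_set nu) p q w)%R.

Definition trans_wt (p q : Q) (w : seq D) : K := trans_wtn (size w) p q w.

Lemma trans_wt_nil (p q : Q) : trans_wt p q [::] = (p == q)%:R%R.
Proof.
rewrite /trans_wt /trans_wtn /= (big_pred1 set0) => [|nu]; last first.
  have -> : nu = set0 by apply/setP => -[[]].
  by rewrite /= eqxx; apply/and4P; split; apply/forallP => -[].
rewrite /runs_wt (big_pred1 [tuple]) => [|t]; last by apply/esym/eqP; apply: tuple0.
by rewrite /= mulr1.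
Qed.

Lemma trans_wt_cons p q a w :
  trans_wt p q (a :: w) =
  (\sum_(q1 : Q) w_int p a q1 * trans_wt q1 q w +
   \sum_(i < size w) \sum_(q1 : Q) \sum_(q2 : Q) \sum_(q3 : Q)
     w_call p a q1 * trans_wt q1 q2 (take i w) * w_ret q2 p (nth a w i) q3
     * trans_wt q3 q (drop i.+1 w))%R.
Proof.
rewrite /trans_wt /trans_wtn /=.
rewrite (big_nesting_recl _ (fun P => runs_wt (size w).+1 P p q (a :: w))); congr (_ + _)%R.
  under [LHS]eq_bigr => nu _ do rewrite runs_wt_shift_rel //.
  by rewrite exchange_big; apply: eq_bigr => q1 _; rewrite -mulr_sumr.
apply: eq_bigr => i _; have i_lt := ltn_ord i.
set u := take i w; set b := nth a w i; set v := drop i.+1 w.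
have w_split : w = u ++ b :: v by rewrite -drop_nth // cat_take_drop.
have u_i : size u = i by rewrite size_take i_lt.
have v_size : size v = (size w - i.+1)%N by rewrite size_drop.
have n_split : (size w).+1 = (i + (size w - i.+1).+1).+1 by lia.
under [LHS]eq_bigr => x _ do rewrite (runs_wt_join_rel _ _ _ _ _ n_split w_split u_i v_size).
rewrite exchange_big; apply: eq_bigr => q1 _.
rewrite exchange_big; apply: eq_bigr => q2 _.
rewrite exchange_big; apply: eq_bigr => q3 _.
rewrite u_i v_size mulr_sum2.
by rewrite pair_big.
Qed.

Lemma pos_weightE w (nu : {set 'I_(size w) * 'I_(size w)}) (r : {ffun 'I_(size w).+1 -> Q})
    (s : nat -> Q) (k : 'I_(size w)) :
  nesting nu -> (forall i, (i <= size w)%N -> r (inord i) = s i) ->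
  pos_weight (x := NWord nu) r k = pos_wt (size w) (rel_of_set nu) s (tnth (in_tuple w) k) k.
Proof.
move=> /nestingP [bound _ uniq_call _] rs; rewrite /pos_weight /pos_wt /=.
have k_lt := ltn_ord k.
case: pickP => [i ik | no_call].
  have ik_rel : rel_of_set nu i k by rewrite rel_of_setE.
  have i_lt := bound _ _ ik_rel.
  have -> : has (fun j => rel_of_set nu j k) (iota 0 k).
    by apply/hasP; exists (nat_of_ord i) => //; rewrite mem_iota; lia.
  have e : (fun j => rel_of_set nu j k) =1 pred1 (nat_of_ord i).
    by move=> j /=; apply/idP/eqP => [jk|->//]; exact: (uniq_call _ _ _ jk ik_rel).
  have i_iota : nat_of_ord i \in iota 0 k by rewrite mem_iota; lia.
  rewrite -big_filter (eq_filter e) (filter_pred1_uniq (iota_uniq 0 k) i_iota) big_seq1.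
  by rewrite !rs //; lia.
have -> : has (fun j => rel_of_set nu j k) (iota 0 k) = false.
  apply/hasP => -[j _ /rel_of_setP [a [b [_ /val_inj eb ab]]]].
  by subst b; have := no_call a; rewrite ab.
have -> : [exists j, (k, j) \in nu] = has (rel_of_set nu k) (iota 0 (size w)).
  apply/existsP/hasP => [[j kj]|[j _ /rel_of_setP [a [b [/val_inj ea _ ab]]]]].
    by exists (nat_of_ord j); [rewrite mem_iota; have := ltn_ord j; lia | rewrite rel_of_setE].
  by subst a; exists b.
by rewrite !rs //; lia.
Qed.

Lemma behavior_runs_wt w (nu : {set 'I_(size w) * 'I_(size w)}) : nesting nu ->
  behavior A (NWord nu) =
  (\sum_(p : Q) \sum_(q : Q) w_iota p * w_kappa q * runs_wt (size w) (rel_of_set nu) p q w)%R.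
Proof.
move=> nu_nest; rewrite /behavior /= big_ffun_tuple big_tuple_cons; apply: eq_bigr => p _.
under eq_bigr => q _ do rewrite mulr_sumr.
rewrite exchange_big; apply: eq_bigr => t _.
rewrite (eq_bigr (fun q => (q == last p t)%:R * (w_iota p * w_kappa q *
  word_wt (pos_wt (size w) (rel_of_set nu) (nth p (p :: t))) w 0))%R); last first.
  by move=> q _; rewrite eq_sym mulrCA.
rewrite sum_delta !ffunE (tnth_nth p) [tnth _ _](tnth_nth p) /= mulrAC.
have -> : nth p (p :: t) (size w) = last p t by rewrite -[last p t](nth_last p (p :: t)) /= size_tuple.
congr (_ * _ * _)%R; case: w nu nu_nest t => [|c w] nu nu_nest t; first by rewrite /= big_ord0.
rewrite (word_wt_prod c); apply: eq_bigr => k _.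
rewrite (@pos_weightE (c :: w) nu _ (nth p (p :: t)) _ nu_nest) ?add0n ?(tnth_nth c) // => i i_le.
by rewrite ffunE (tnth_nth p) /= inordK //; lia.
Qed.

Lemma proj_nw_behavior w : (0 < size w)%N ->
  proj_nw (behavior A) w = (\sum_(p : Q) \sum_(q : Q) w_iota p * w_kappa q * trans_wt p q w)%R.
Proof.
move=> w_gt0; rewrite /proj_nw w_gt0.
under eq_bigr => nu nu_nest do rewrite behavior_runs_wt //.
rewrite exchange_big; apply: eq_bigr => p _; rewrite exchange_big; apply: eq_bigr => q _.
by rewrite /trans_wt /trans_wtn mulr_sumr.
Qed.

End Runs.

Section AlgebraicSystem.
Variables (K : comNzSemiRingType) (D : finType) (A : wnwa D K).
Local Notation Q := (wQ A).
Local Notation X := (option (Q * Q)).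
Local Open Scope ring_scope.

(* The variable [Some (p, q)] stands for the series [trans_series p q] and [None]
   for the projection of the behavior of [A]. *)
Definition trans_series (p q : Q) : series D K :=
  fun w => if w is [::] then 0 else trans_wt p q w.

Definition sys_sol (x : X) : series D K :=
  if x is Some pq then trans_series pq.1 pq.2
  else fun w => \sum_(p : Q) \sum_(q : Q) w_iota p * w_kappa q * trans_series p q w.

(* [(a, o1, Some (b, o2))] encodes the monomial [a X1 b X2] and [(a, o1, None)] the
   monomial [a X1], where an optional variable [None] is omitted. *)
Definition mon_index := (D * X * option (D * X))%type.

Definition opt_var (o : X) : seq (D + X) := if o is Some xy then [:: inr (Some xy)] else [::].

Definition monomial (i : mon_index) : seq (D + X) :=
  inl i.1.1 :: opt_var i.1.2 ++ (if i.2 is Some bo then inl bo.1 :: opt_var bo.2 else [::]).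

Definition opt_series (o : X) : series D K :=
  if o is Some xy then trans_series xy.1 xy.2 else char_word K [::].

Definition tail_series (o : option (D * X)) : series D K :=
  if o is Some bo then cauchy (char_word K [:: bo.1]) (opt_series bo.2) else char_word K [::].

(* Chosen so that [trans_wt x y = [x == y] eps + trans_series x y] becomes a sum
   over the optional variable, see [trans_wt_split]. *)
Definition opt_delta (o : X) (x y : Q) : K :=
  if o is Some xy then ((xy.1 == x) && (xy.2 == y))%:R else (x == y)%:R.

Definition trans_coef (p q : Q) (i : mon_index) : K :=
  if i.2 is Some bo then
    \sum_(q1 : Q) \sum_(q2 : Q) \sum_(q3 : Q)
      w_call p i.1.1 q1 * opt_delta i.1.2 q1 q2 * w_ret q2 p bo.1 q3 * opt_delta bo.2 q3 q
  else \sum_(q1 : Q) w_int p i.1.1 q1 * opt_delta i.1.2 q1 q.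

Definition sys_coef (x : X) (i : mon_index) : K :=
  if x is Some pq then trans_coef pq.1 pq.2 i
  else \sum_(p : Q) \sum_(q : Q) w_iota p * w_kappa q * trans_coef p q i.

Definition sys_poly (x : X) (u : seq (D + X)) : K :=
  if [pick i | monomial i == u] is Some i then sys_coef x i else 0.

Definition sys_supp : seq (seq (D + X)) := [seq monomial i | i <- index_enum mon_index].

Lemma monomial_inj : injective monomial.
Proof.
move=> [[a [x|]] [[b [y|]]|]] [[a' [x'|]] [[b' [y'|]]|]] //= e;
  by injection e; intros; subst.
Qed.

Lemma sys_poly_monomial x i : sys_poly x (monomial i) = sys_coef x i.
Proof. by rewrite /sys_poly; case: pickP => [j /eqP/monomial_inj -> //|/(_ i)]; rewrite eqxx. Qed.

Lemma uniq_sys_supp : uniq sys_supp.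
Proof. by rewrite map_inj_uniq ?index_enum_uniq //; exact: monomial_inj. Qed.

Lemma sys_poly_supp x u : sys_poly x u != 0 -> u \in sys_supp.
Proof.
rewrite /sys_poly; case: pickP => [i /eqP <- _|_]; last by rewrite eqxx.
by apply: map_f; rewrite mem_index_enum.
Qed.

Lemma sys_poly_proper x y : sys_poly x [::] = 0 /\ sys_poly x [:: inr y] = 0.
Proof. by rewrite /sys_poly; split; case: pickP => // -[[a o1] o2]. Qed.

Lemma sys_sol_nil x : sys_sol x [::] = 0.
Proof. by case: x => [pq|] //=; rewrite big1 // => p _; rewrite big1 // => q _; rewrite mulr0. Qed.

Lemma mon_eval_opt_var_cat o m :
  mon_eval sys_sol (opt_var o ++ m) = cauchy (opt_series o) (mon_eval sys_sol m).
Proof. by case: o => [xy|] //=; apply: functional_extensionality => w; rewrite cauchy1s. Qed.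

Lemma mon_eval_monomial i : mon_eval sys_sol (monomial i) =
  cauchy (char_word K [:: i.1.1]) (cauchy (opt_series i.1.2) (tail_series i.2)).
Proof.
rewrite /monomial /= mon_eval_opt_var_cat; congr (cauchy _ (cauchy _ _)).
case: i.2 => [[b [xy|]]|] //=; congr cauchy.
by apply: functional_extensionality => w; rewrite cauchys1.
Qed.

Lemma trans_wt_split x y w : trans_wt x y w = \sum_(o : X) opt_delta o x y * opt_series o w.
Proof.
rewrite big_option big_pair /=.
rewrite (eq_bigr (fun a => (a == x)%:R * \sum_(b : Q) (b == y)%:R * trans_series a b w)); last first.
  by move=> a _; rewrite mulr_sumr; apply: eq_bigr => b _; rewrite /= -mulnb natrM mulrA.
rewrite sum_delta sum_delta.
case: w => [|c w] /=; first by rewrite trans_wt_nil /char_word eqxx mulr1 addr0.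
by rewrite /char_word /= mulr0 add0r.
Qed.


Lemma trans_wt_internal p q c w :
  \sum_(q1 : Q) w_int p c q1 * trans_wt q1 q w =
  \sum_(o : X) trans_coef p q (c, o, None) * cauchy (opt_series o) (tail_series None) w.
Proof.
under [RHS]eq_bigr => o _ do rewrite cauchys1 mulr_suml.
rewrite [RHS]exchange_big; apply: eq_bigr => q1 _.
by rewrite trans_wt_split mulr_sumr; apply: eq_bigr => o _; rewrite mulrA.
Qed.

Lemma trans_wt_call p q c u b v :
  \sum_(q1 : Q) \sum_(q2 : Q) \sum_(q3 : Q)
    w_call p c q1 * trans_wt q1 q2 u * w_ret q2 p b q3 * trans_wt q3 q v =
  \sum_(o1 : X) \sum_(o3 : X)
    trans_coef p q (c, o1, Some (b, o3)) * (opt_series o1 u * opt_series o3 v).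
Proof.
under eq_bigr => q1 _ do under eq_bigr => q2 _ do under eq_bigr => q3 _ do
  rewrite !trans_wt_split mulr_sum2.
under eq_bigr => q1 _ do under eq_bigr => q2 _ do rewrite exchange_big.
under eq_bigr => q1 _ do rewrite exchange_big.
rewrite exchange_big; apply: eq_bigr => o1 _.
under eq_bigr => q1 _ do under eq_bigr => q2 _ do rewrite exchange_big.
under eq_bigr => q1 _ do rewrite exchange_big.
rewrite exchange_big; apply: eq_bigr => o3 _.
rewrite /trans_coef /= !mulr_suml; apply: eq_bigr => q1 _.
rewrite !mulr_suml; apply: eq_bigr => q2 _.
by rewrite !mulr_suml; apply: eq_bigr => q3 _; ring.
Qed.

Lemma trans_wt_calls p q c w :
  \sum_(i < size w) \sum_(q1 : Q) \sum_(q2 : Q) \sum_(q3 : Q)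
    w_call p c q1 * trans_wt q1 q2 (take i w) * w_ret q2 p (nth c w i) q3
    * trans_wt q3 q (drop i.+1 w) =
  \sum_(o1 : X) \sum_(bo : D * X)
    trans_coef p q (c, o1, Some bo) * cauchy (opt_series o1) (tail_series (Some bo)) w.
Proof.
under eq_bigr => i _ do rewrite trans_wt_call.
symmetry; under [LHS]eq_bigr => o1 _ do rewrite big_pair.
under [LHS]eq_bigr => o1 _ do under eq_bigr => b _ do under eq_bigr => o3 _ do
  rewrite /= (cauchy_letter_r c) mulr_sumr.
under [LHS]eq_bigr => o1 _ do under eq_bigr => b _ do rewrite exchange_big.
under [LHS]eq_bigr => o1 _ do rewrite exchange_big.
rewrite exchange_big; apply: eq_bigr => i _; apply: eq_bigr => o1 _.
rewrite exchange_big; apply: eq_bigr => o3 _.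
rewrite -(sum_delta (nth c w i) (fun b => trans_coef p q (c, o1, Some (b, o3)) *
  (opt_series o1 (take i w) * opt_series o3 (drop i.+1 w)))).
by apply: eq_bigr => b _; rewrite eq_sym; ring.
Qed.

Lemma trans_series_eq p q w :
  trans_series p q w = \sum_(i : mon_index) trans_coef p q i * mon_eval sys_sol (monomial i) w.
Proof.
under eq_bigr => i _ do rewrite mon_eval_monomial.
rewrite big_pair big_pair; case: w => [|c w].
  by rewrite big1 // => a _; rewrite big1 // => o1 _; rewrite big1 // => o2 _;
    rewrite cauchy_letter mulr0.
rewrite (eq_bigr (fun a => (a == c)%:R * \sum_(o1 : X) \sum_(o2 : option (D * X))
  trans_coef p q (a, o1, o2) * cauchy (opt_series o1) (tail_series o2) w)); last first.
  move=> a _; rewrite mulr_sumr; apply: eq_bigr => o1 _; rewrite mulr_sumr.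
  by apply: eq_bigr => o2 _; rewrite cauchy_letter eq_sym mulrCA.
under [RHS]eq_bigr => a _ do under eq_bigr => o1 _ do rewrite big_option.
rewrite sum_delta big_split /= /trans_series trans_wt_cons.
by rewrite trans_wt_internal trans_wt_calls.
Qed.

Lemma sys_solP x w :
  sys_sol x w = \sum_(u <- sys_supp) sys_poly x u * mon_eval sys_sol u w.
Proof.
rewrite big_map; under eq_bigr => i _ do rewrite sys_poly_monomial.
case: x => [[p q]|] /=; first exact: trans_series_eq.
under [LHS]eq_bigr => p _ do under eq_bigr => q _ do rewrite trans_series_eq mulr_sumr.
under [LHS]eq_bigr => p _ do rewrite exchange_big.
rewrite exchange_big; apply: eq_bigr => i _.
rewrite mulr_suml; apply: eq_bigr => p _.
by rewrite mulr_suml; apply: eq_bigr => q _; rewrite mulrA.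
Qed.

Lemma proj_nw_sys_sol w : proj_nw (behavior A) w = sys_sol None w.
Proof. by case: w => [|c w]; rewrite ?sys_sol_nil // proj_nw_behavior. Qed.

End AlgebraicSystem.

Theorem proposition6p3 (K : comNzSemiRingType) (D : finType) (S : nword D -> K) :
  regular_nw S -> algebraic (proj_nw S).
Proof.
move=> [A S_A].
exists (option (wQ A * wQ A)), (@sys_poly K D A), (@sys_supp K D A), (@sys_sol K D A), None.
split; [exact: uniq_sys_supp | exact: sys_poly_supp | exact: sys_poly_proper
       | exact: sys_sol_nil | split; first exact: sys_solP].
by move=> w; rewrite (eq_proj_nw S_A) proj_nw_sys_sol.
Qed.
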